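(* $\mathsf{N4CK}$ has the Disjunction Property (for all $\phi,\psi\in\mathcal{L}_{\Box\!\!\rightarrow}$: $\phi\vee\psi\in\mathsf{N4CK}$ iff $\phi\in\mathsf{N4CK}$ or $\psi\in\mathsf{N4CK}$) and the Constructible Falsity Property (for all $\phi,\psi$: $\sim(\phi\wedge\psi)\in\mathsf{N4CK}$ iff $\sim\phi\in\mathsf{N4CK}$ or $\sim\psi\in\mathsf{N4CK}$).
   Context: Let $\mathcal{L}_{\Box\!\!\rightarrow}$ be the language built from propositional variables with binary $\wedge,\vee,\to$, unary strong negation $\sim$, and a binary would-conditional $\Box\!\!\rightarrow$. A Nelsonian conditional model is $\mathcal{M}=(W,\leq,R,V^+,V^-)$ where $W\neq\emptyset$, $\leq$ is a preorder, $V^+,V^-$ map each variable to a $\leq$-upward-closed subset of $W$, and $R\subseteq W\times(\mathcal{P}(W)\times\mathcal{P}(W))\times W$ (write $R_{(X,Y)}(w,v)$) satisfies for all $X,Y$: (c1) if $w\leq w'$ and $R_{(X,Y)}(w,v)$ then $R_{(X,Y)}(w',v')$ for some $v'\geq v$; (c2) if $R_{(X,Y)}(w,v)$ and $v\leq v'$ then $R_{(X,Y)}(w',v')$ for some $w'\geq w$. Verification $\models^+$ / falsification $\models^-$: $w\models^\pm p$ iff $w\in V^\pm(p)$; $\wedge$ verified iff both verified, falsified iff one falsified; $\vee$ verified iff one verified, falsified iff both falsified; $\sim$ swaps $\models^+$ and $\models^-$; $w\models^+\psi\to\chi$ iff for all $v\geq w$, $v\models^+\psi$ implies $v\models^+\chi$;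 $w\models^-\psi\to\chi$ iff $w\models^+\psi$ and $w\models^-\chi$; $w\models^+\psi\Box\!\!\rightarrow\chi$ iff for all $v\geq w$ and $u$ with $R_{\|\psi\|_\mathcal{M}}(v,u)$, $u\models^+\chi$; $w\models^-\psi\Box\!\!\rightarrow\chi$ iff some $u$ has $R_{\|\psi\|_\mathcal{M}}(w,u)$ and $u\models^-\chi$; $\|\psi\|_\mathcal{M}=(\{w\mid w\models^+\psi\},\{w\mid w\models^-\psi\})$. $\phi\in\mathsf{N4CK}$ means $\phi$ is verified at every point of every such model. *)

From Stdlib Require Import Bool.

Inductive form : Type :=
  | Var  : nat -> form
  | And  : form -> form -> form
  | Or   : form -> form -> form
  | Imp  : form -> form -> form
  | SNeg : form -> form
  | Cond : form -> form -> form.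

Record nmodel : Type := NModel {
  W : Type;
  W_nonempty : inhabited W;
  le : W -> W -> Prop;
  le_refl : forall w, le w w;
  le_trans : forall u v w, le u v -> le v w -> le u w;
  Vp : nat -> W -> Prop;
  Vm : nat -> W -> Prop;
  Vp_up : forall p w w', le w w' -> Vp p w -> Vp p w';
  Vm_up : forall p w w', le w w' -> Vm p w -> Vm p w';
  R : (W -> Prop) -> (W -> Prop) -> W -> W -> Prop;
  c1 : forall X Y w w' v, le w w' -> R X Y w v ->
         exists v', le v v' /\ R X Y w' v';
  c2 : forall X Y w v v', R X Y w v -> le v v' ->
         exists w', le w w' /\ R X Y w' v'
}.

(* sat M true w φ : w verifies φ ;  sat M false w φ : w falsifies φ *)
Fixpoint sat (M : nmodel) (b : bool) (w : W M) (f : form) {struct f} : Prop :=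
  match f with
  | Var p => if b then Vp M p w else Vm M p w
  | And a c => if b then sat M true w a /\ sat M true w c
               else sat M false w a \/ sat M false w c
  | Or a c => if b then sat M true w a \/ sat M true w c
              else sat M false w a /\ sat M false w c
  | Imp a c => if b then forall v, le M w v -> sat M true v a -> sat M true v c
               else sat M true w a /\ sat M false w c
  | SNeg a => sat M (negb b) w a
  | Cond a c =>
      if b then forall v u, le M w v ->
                  R M (fun x => sat M true x a) (fun x => sat M false x a) v u ->
                  sat M true u c
      else exists u, R M (fun x => sat M true x a) (fun x => sat M false x a) w u
                     /\ sat M false u c
  end.

Definition N4CK (f : form) : Prop := forall (M : nmodel) (w : W M), sat M true w f.

(** Given countermodels [(M1, w1)] of [phi] and [(M2, w2)] of [psi], put
    them side by side above a fresh root.  Each summand is upward closed and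
    closed under [R], so its points satisfy exactly what they satisfied
    before; by persistence, whatever the root verifies (falsifies) is then
    verified (falsified) at [w1] and [w2].  Since verifying [Or] and
    falsifying [And] are pointwise disjunctions, the root witnesses that
    neither [phi \/ psi] nor [~(phi /\ psi)] is valid when the disjuncts
    are not. *)

From Stdlib Require Import Classical FunctionalExtensionality PropExtensionality.

Lemma sat_mono (M : nmodel) (f : form) :
  forall b w w', le M w w' -> sat M b w f -> sat M b w' f.
Proof.
  induction f as [p|f1 IH1 f2 IH2|f1 IH1 f2 IH2|f1 IH1 f2 IH2|f1 IH1|f1 IH1 f2 IH2];
    intros b w w' Hle H; destruct b; simpl in *.
  - eapply Vp_up; eauto.
  - eapply Vm_up; eauto.
  - destruct H; split; eauto.
  - destruct H; [left|right]; eauto.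
  - destruct H; [left|right]; eauto.
  - destruct H; split; eauto.
  - intros v Hv. apply H. eapply le_trans; eauto.
  - destruct H; split; eauto.
  - eauto.
  - eauto.
  - intros v u Hv HR. apply (H v u); auto. eapply le_trans; eauto.
  - destruct H as [u [HR Hu]].
    destruct (c1 M _ _ _ _ _ Hle HR) as [u' [Hu' HR']].
    exists u'; split; eauto.
Qed.

Section Embedding.

Variables (M N : nmodel) (e : W M -> W N).

Hypothesis le_emb : forall a b, le N (e a) (e b) <-> le M a b.
Hypothesis le_emb_up : forall a v, le N (e a) v -> exists b, v = e b.
Hypothesis Vp_emb : forall p a, Vp N p (e a) <-> Vp M p a.
Hypothesis Vm_emb : forall p a, Vm N p (e a) <-> Vm M p a.
Hypothesis R_emb : forall X Y a b,
  R N X Y (e a) (e b) <-> R M (fun x => X (e x)) (fun x => Y (e x)) a b.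
Hypothesis R_emb_up : forall X Y a v, R N X Y (e a) v -> exists b, v = e b.

Lemma R_emb_sat (f : form) :
  (forall b a, sat N b (e a) f <-> sat M b a f) ->
  forall a b, R N (fun x => sat N true x f) (fun x => sat N false x f) (e a) (e b) <->
              R M (fun x => sat M true x f) (fun x => sat M false x f) a b.
Proof.
  intros IH a b. rewrite R_emb.
  assert (Hsat : forall s, (fun x => sat N s (e x) f) = (fun x => sat M s x f)).
  { intros s. extensionality x. apply propositional_extensionality, IH. }
  now rewrite !Hsat.
Qed.

Lemma sat_emb (f : form) : forall b a, sat N b (e a) f <-> sat M b a f.
Proof.
  induction f as [p|f1 IH1 f2 IH2|f1 IH1 f2 IH2|f1 IH1 f2 IH2|f1 IH1|f1 IH1 f2 IH2];
    intros b a; destruct b; simpl.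
  - apply Vp_emb.
  - apply Vm_emb.
  - now rewrite IH1, IH2.
  - now rewrite IH1, IH2.
  - now rewrite IH1, IH2.
  - now rewrite IH1, IH2.
  - split.
    + intros H v Hv. rewrite <- IH1, <- IH2. apply H, le_emb, Hv.
    + intros H v Hv. destruct (le_emb_up _ _ Hv) as [b ->].
      rewrite IH1, IH2. apply H, le_emb, Hv.
  - now rewrite IH1, IH2.
  - apply IH1.
  - apply IH1.
  - split.
    + intros H v u Hv HR. apply IH2, (H (e v) (e u)).
      * apply le_emb, Hv.
      * apply R_emb_sat; auto.
    + intros H v u Hv HR.
      destruct (le_emb_up _ _ Hv) as [b ->].
      destruct (R_emb_up _ _ _ _ HR) as [c ->].
      apply IH2, (H b c).
      * apply le_emb, Hv.
      * apply R_emb_sat; auto.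
  - split.
    + intros [u [HR Hu]]. destruct (R_emb_up _ _ _ _ HR) as [c ->].
      exists c. split.
      * apply R_emb_sat; auto.
      * apply IH2, Hu.
    + intros [u [HR Hu]]. exists (e u). split.
      * apply R_emb_sat; auto.
      * apply IH2, Hu.
Qed.

End Embedding.

Section Glue.

Variables M1 M2 : nmodel.

(* [None] is the fresh root. *)
Definition glue_world : Type := option (W M1 + W M2).

Definition glue_le (w w' : glue_world) : Prop :=
  match w, w' with
  | None, _ => True
  | Some (inl a), Some (inl a') => le M1 a a'
  | Some (inr a), Some (inr a') => le M2 a a'
  | _, _ => False
  end.

Definition glue_V (V1 : nat -> W M1 -> Prop) (V2 : nat -> W M2 -> Prop)
    (p : nat) (w : glue_world) : Prop :=
  match w with
  | None => False
  | Some (inl a) => V1 p a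
  | Some (inr a) => V2 p a
  end.

Definition glue_R (X Y : glue_world -> Prop) (w v : glue_world) : Prop :=
  match w, v with
  | Some (inl a), Some (inl b) =>
      R M1 (fun x => X (Some (inl x))) (fun x => Y (Some (inl x))) a b
  | Some (inr a), Some (inr b) =>
      R M2 (fun x => X (Some (inr x))) (fun x => Y (Some (inr x))) a b
  | _, _ => False
  end.

Lemma glue_le_refl : forall w, glue_le w w.
Proof. intros [[a|a]|]; simpl; auto using le_refl. Qed.

Lemma glue_le_trans : forall u v w, glue_le u v -> glue_le v w -> glue_le u w.
Proof.
  intros [[a|a]|] [[b|b]|] [[c|c]|]; simpl; intros; try tauto; eapply le_trans; eauto.
Qed.

Lemma glue_V_up (V1 : nat -> W M1 -> Prop) (V2 : nat -> W M2 -> Prop) :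
  (forall p a a', le M1 a a' -> V1 p a -> V1 p a') ->
  (forall p a a', le M2 a a' -> V2 p a -> V2 p a') ->
  forall p w w', glue_le w w' -> glue_V V1 V2 p w -> glue_V V1 V2 p w'.
Proof.
  intros H1 H2 p [[a|a]|] [[b|b]|]; simpl; intros; try tauto; eauto.
Qed.

Lemma glue_c1 : forall X Y w w' v, glue_le w w' -> glue_R X Y w v ->
  exists v', glue_le v v' /\ glue_R X Y w' v'.
Proof.
  intros X Y [[a|a]|] [[b|b]|] [[c|c]|]; simpl; intros Hle HR; try tauto.
  - destruct (c1 M1 _ _ _ _ _ Hle HR) as [v' ?]. now exists (Some (inl v')).
  - destruct (c1 M2 _ _ _ _ _ Hle HR) as [v' ?]. now exists (Some (inr v')).
Qed.

Lemma glue_c2 : forall X Y w v v', glue_R X Y w v -> glue_le v v' ->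
  exists w', glue_le w w' /\ glue_R X Y w' v'.
Proof.
  intros X Y [[a|a]|] [[b|b]|] [[c|c]|]; simpl; intros HR Hle; try tauto.
  - destruct (c2 M1 _ _ _ _ _ HR Hle) as [w' ?]. now exists (Some (inl w')).
  - destruct (c2 M2 _ _ _ _ _ HR Hle) as [w' ?]. now exists (Some (inr w')).
Qed.

Definition glue : nmodel :=
  NModel glue_world (inhabits None) glue_le glue_le_refl glue_le_trans
    (glue_V (Vp M1) (Vp M2)) (glue_V (Vm M1) (Vm M2))
    (glue_V_up _ _ (Vp_up M1) (Vp_up M2)) (glue_V_up _ _ (Vm_up M1) (Vm_up M2))
    glue_R glue_c1 glue_c2.

Lemma sat_glue_inl f b a : sat glue b (Some (inl a)) f <-> sat M1 b a f.
Proof.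
  apply (sat_emb M1 glue (fun a => Some (inl a))); try reflexivity.
  - intros a' [[v|v]|]; simpl; try tauto. eauto.
  - intros X Y a' [[v|v]|]; simpl; try tauto. eauto.
Qed.

Lemma sat_glue_inr f b a : sat glue b (Some (inr a)) f <-> sat M2 b a f.
Proof.
  apply (sat_emb M2 glue (fun a => Some (inr a))); try reflexivity.
  - intros a' [[v|v]|]; simpl; try tauto. eauto.
  - intros X Y a' [[v|v]|]; simpl; try tauto. eauto.
Qed.

Lemma sat_glue_root_inl f b a : sat glue b None f -> sat M1 b a f.
Proof. intros H. apply sat_glue_inl. now apply (sat_mono glue f b None). Qed.

Lemma sat_glue_root_inr f b a : sat glue b None f -> sat M2 b a f.
Proof. intros H. apply sat_glue_inr. now apply (sat_mono glue f b None). Qed.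

End Glue.

Lemma valid_or_split (b : bool) (phi psi : form) :
  (forall M w, sat M b w phi \/ sat M b w psi) ->
  (forall M w, sat M b w phi) \/ (forall M w, sat M b w psi).
Proof.
  intros H. destruct (classic (forall M w, sat M b w phi)) as [Hphi|Hphi];
    [left; exact Hphi | right].
  apply not_all_ex_not in Hphi as [M1 Hphi].
  apply not_all_ex_not in Hphi as [w1 Hphi].
  intros M2 w2. destruct (H (glue M1 M2) None) as [Hroot|Hroot].
  - contradiction (Hphi (sat_glue_root_inl M1 M2 phi b w1 Hroot)).
  - exact (sat_glue_root_inr M1 M2 psi b w2 Hroot).
Qed.

Theorem proposition7 :
  (forall phi psi : form, N4CK (Or phi psi) <-> N4CK phi \/ N4CK psi) /\
  (forall phi psi : form,
      N4CK (SNeg (And phi psi)) <-> N4CK (SNeg phi) \/ N4CK (SNeg psi)).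
Proof.
  unfold N4CK; split; intros phi psi; split; simpl.
  - apply (valid_or_split true).
  - intros [H|H] M w; [left|right]; apply H.
  - apply (valid_or_split false).
  - intros [H|H] M w; [left|right]; apply H.
Qed.
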